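(* Let $q\neq-1$ be real and $n\ge0$. Then $$U_{2n+1}(x,s,q)=\sum_{k=0}^{n}\begin{bmatrix} 2n+2\\ 2k\end{bmatrix}\frac{1}{[2k+1]}(-q;q)_{2n-2k+1}(-1)^{n-k}G_{2n-2k+2}(q)\,x^{2n+1-2k}\,U_{2k}(x,s,q).$$
   Context: $U_{-1}=0$, $U_0=1$, $U_n(x,s,q)=(1+q^{n})x\,U_{n-1}(x,s,q)+q^{n-1}s\,U_{n-2}(x,s,q)$ for $n\ge1$. Notation: $[m]=1+q+\cdots+q^{m-1}$, $[m]!=[1]\cdots[m]$, $\begin{bmatrix} m\\ j\end{bmatrix}=\frac{[m]!}{[j]![m-j]!}$; $(a;q)_m=(1-a)(1-aq)\cdots(1-aq^{m-1})$, so $(-q;q)_m=(1+q)\cdots(1+q^m)$. With $e(z)=\sum_{m\ge0}z^m/[m]!$, the $q$-Genocchi numbers $G_{2m}(q)$, $m\ge1$, are defined by the formal power series identity $z\frac{e(z)-e(-z)}{e(z)+e(-z)}=\sum_{m\ge1}\frac{(-1)^{m-1}G_{2m}(q)(-q;q)_{2m-1}}{[2m]!}z^{2m}$. *)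

From mathcomp Require Import all_boot all_order all_algebra.
Set Implicit Arguments. Unset Strict Implicit. Unset Printing Implicit Defensive.
Import Order.TTheory GRing.Theory Num.Theory.
Local Open Scope ring_scope.

Section Defs.
Variable R : realFieldType.

Definition qint (q : R) (m : nat) : R := \sum_(i < m) q ^+ i.
Definition qfact (q : R) (m : nat) : R := \prod_(i < m) qint q i.+1.
Definition qbinom (q : R) (m j : nat) : R :=
  qfact q m / (qfact q j * qfact q (m - j)).
Definition qpoch (a q : R) (m : nat) : R := \prod_(i < m) (1 - a * q ^+ i).

(* U_{n-1}, U_n as a pair; U_{-1} = 0, U_0 = 1,
   U_n = (1+q^n) x U_{n-1} + q^(n-1) s U_{n-2}. *)
Fixpoint Upair (x s q : R) (n : nat) : R * R :=
  match n with
  | 0 => (0, 1)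
  | n'.+1 => let (a, b) := Upair x s q n' in
             (b, (1 + q ^+ n'.+1) * x * b + q ^+ n' * s * a)
  end.
Definition U (x s q : R) (n : nat) : R := (Upair x s q n).2.

(* Formal power series as coefficient sequences nat -> R. *)
Definition fps_add (a b : nat -> R) : nat -> R := fun n => a n + b n.
Definition fps_sub (a b : nat -> R) : nat -> R := fun n => a n - b n.
Definition fps_mul (a b : nat -> R) : nat -> R :=
  fun n => \sum_(i < n.+1) a i * b (n - i)%N.
Definition fps_mulz (a : nat -> R) : nat -> R :=
  fun n => if n is n'.+1 then a n' else 0.

(* e(z) = sum z^m/[m]! and e(-z) *)
Definition qexp (q : R) : nat -> R := fun m => (qfact q m)^-1.
Definition qexpN (q : R) : nat -> R := fun m => (-1) ^+ m * (qfact q m)^-1.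

Definition genocchi_series (q : R) (G : nat -> R) : nat -> R :=
  fun N => if odd N || (N == 0)%N then 0 else
    (-1) ^+ (N./2).-1 * G N * qpoch (- q) q N.-1 / qfact q N.

(* G is the q-Genocchi sequence: the identity
   z (e(z)-e(-z))/(e(z)+e(-z)) = genocchi_series, written after clearing
   the (invertible, constant term 2) denominator e(z)+e(-z). *)
Definition is_qGenocchi (q : R) (G : nat -> R) : Prop :=
  forall N, fps_mul (fps_add (qexp q) (qexpN q)) (genocchi_series q G) N
            = fps_mulz (fps_sub (qexp q) (qexpN q)) N.

End Defs.

(* Solving the recurrence gives U_{M-1} = sum_i [M, i] q^C(i,2) x^i rho_{M-i}, where
   rho_{2k+1} = prod_{l<k} (x^2 + q^(2l+1) s) and rho vanishes at even indices.  For
   h(z) = sum_m U_m z^(m+1)/[m+1]! this reads h(z) = E_q(xz) p(z) with p(z) odd, and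
   since e_q(-z) E_q(z) = 1, e_q(-xz) h(z) = p(z) is odd.  Splitting h into its even
   and odd parts, this says (e(xz) + e(-xz)) h_even = (e(xz) - e(-xz)) h_odd.  The
   Genocchi identity at xz reads (e(xz) + e(-xz)) g(xz)/(xz) = e(xz) - e(-xz); hence
   h_even(z) = g(xz)/(xz) h_odd(z), and the coefficient of z^(2n+2) is the theorem. *)

From mathcomp Require Import all_boot all_order all_algebra.
From mathcomp Require Import ring zify.
Import Order.TTheory GRing.Theory Num.Theory.
Local Open Scope ring_scope.
Set Implicit Arguments. Unset Strict Implicit.

Section FormalPowerSeries.
Variable R : realFieldType.
Implicit Types (a b c : nat -> R) (u : R).

Definition fps_scale u a : nat -> R := fun n => u ^+ n * a n.
Definition fps_even a : nat -> R := fun n => if odd n then 0 else a n.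
Definition fps_odd a : nat -> R := fun n => if odd n then a n else 0.
Definition fps_one : nat -> R := fun n => (n == 0)%:R.
Definition fps_reflect a : nat -> R := fun n => (-1) ^+ n * a n.

Lemma eq_fps_mul a a' b b' : a =1 a' -> b =1 b' ->
  forall N, fps_mul a b N = fps_mul a' b' N.
Proof. by move=> ea eb N; apply: eq_bigr => i _; rewrite ea eb. Qed.

(* Coefficients up to N only depend on the truncations to degree N, whose
   product is computed in the ring of polynomials. *)
Let trunc N a : {poly R} := \poly_(k < N.+1) a k.

Let coef_trunc_mul a b N i : (i <= N)%N ->
  (trunc N a * trunc N b)`_i = fps_mul a b i.
Proof.
move=> leiN; rewrite coefM; apply: eq_bigr => j _.
by rewrite !coef_poly !ifT //; have := ltn_ord j; lia.
Qed.

Lemma fps_mulC a b N : fps_mul a b N = fps_mul b a N.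
Proof. by rewrite -!(@coef_trunc_mul _ _ N) // mulrC. Qed.

Lemma fps_mulA a b c N :
  fps_mul (fps_mul a b) c N = fps_mul a (fps_mul b c) N.
Proof.
have -> : fps_mul (fps_mul a b) c N = (trunc N a * trunc N b * trunc N c)`_N.
  rewrite coefM; apply: eq_bigr => j _; have := ltn_ord j => ltjN.
  by rewrite coef_trunc_mul ?coef_poly ?ifT //; lia.
have -> : fps_mul a (fps_mul b c) N = (trunc N a * (trunc N b * trunc N c))`_N.
  rewrite coefM; apply: eq_bigr => j _; have := ltn_ord j => ltjN.
  by rewrite coef_trunc_mul ?coef_poly ?ifT //; lia.
by rewrite mulrA.
Qed.

Lemma fps_mul1l b N : fps_mul fps_one b N = b N.
Proof.
rewrite /fps_mul big_ord_recl big1 ?addr0 ?subn0 ?mul1r // => i _.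
by rewrite /fps_one mul0r.
Qed.

Lemma fps_scale_one u : fps_scale u fps_one =1 fps_one.
Proof. by case=> [|n]; rewrite /fps_scale /fps_one ?expr0 ?mul1r ?mulr0. Qed.

Lemma fps_mul_scale u a b N :
  fps_mul (fps_scale u a) (fps_scale u b) N = u ^+ N * fps_mul a b N.
Proof.
rewrite /fps_mul mulr_sumr; apply: eq_bigr => i _.
rewrite /fps_scale mulrACA -exprD subnKC //; exact: ltnSE.
Qed.

Lemma fps_mul_divz a b N : b 0%N = 0 ->
  fps_mul a b N.+1 = fps_mul a (fun n => b n.+1) N.
Proof.
move=> b0; rewrite /fps_mul big_ord_recr /= subnn b0 mulr0 addr0.
by apply: eq_bigr => i _; rewrite subSn // -ltnS.
Qed.

(* The left side is a(-z) h(z) + a(z) h(-z), whose N-th coefficient is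
   (1 + (-1)^N) times that of a(-z) h(z). *)
Lemma fps_mul_even_odd a h N :
  fps_mul (fps_add a (fps_reflect a)) (fps_even h) N
  - fps_mul (fps_sub a (fps_reflect a)) (fps_odd h) N
  = (1 + (-1) ^+ N) * fps_mul (fps_reflect a) h N.
Proof.
rewrite /fps_mul mulr_sumr -sumrB; apply: eq_bigr => i _.
have leiN : (i <= N)%N by rewrite -ltnS.
have sgnN : (-1) ^+ N = (-1) ^+ i * (-1) ^+ (N - i) :> R by rewrite -exprD subnKC.
rewrite sgnN /fps_add /fps_sub /fps_reflect /fps_even /fps_odd.
rewrite -(signr_odd _ i) -(signr_odd _ (N - i)).
by case: (odd i); case: (odd (N - i)); rewrite /= ?expr0 ?expr1; ring.
Qed.

Lemma fps_mulIl a b c : a 0%N != 0 ->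
  (forall N, fps_mul a b N = fps_mul a c N) -> b =1 c.
Proof.
move=> a0 eabc; elim/ltn_ind => N IH.
have := eabc N; rewrite /fps_mul !big_ord_recl !subn0.
rewrite (eq_bigr (fun i : 'I_N => a i.+1 * c (N - i.+1)%N)) => [|i _].
  by move/addIr/(mulfI a0).
by rewrite lift0 IH //; have := ltn_ord i; lia.
Qed.

End FormalPowerSeries.

Arguments fps_one {R}.

Section QIntegers.
Variables (R : realFieldType) (q : R).

Lemma qint0 : qint q 0 = 0. Proof. by rewrite /qint big_ord0. Qed.

Lemma qintS k : qint q k.+1 = qint q k + q ^+ k.
Proof. by rewrite /qint big_ord_recr. Qed.

Lemma qintD m n : qint q (m + n) = qint q m + q ^+ m * qint q n.
Proof.
elim: n => [|n IH]; first by rewrite addn0 qint0 mulr0 addr0.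
by rewrite addnS !qintS IH exprD; ring.
Qed.

Lemma qint_geometric k : q ^+ k = 1 - (1 - q) * qint q k.
Proof.
elim: k => [|k IH]; first by rewrite qint0 expr0; ring.
by rewrite qintS exprS IH; ring.
Qed.

Hypothesis qN1 : q != -1.

(* [k+1] = 0 forces q^(k+1) = 1, hence q = 1 (where [k+1] = k+1) or q = -1. *)
Lemma qint_neq0 k : qint q k.+1 != 0.
Proof.
apply/negP => /eqP qint0k.
have qX1 : q ^+ k.+1 = 1 by rewrite qint_geometric qint0k mulr0 subr0.
have /eqP : `|q| == 1 by rewrite -(pexpr_eq1 (n := k.+1)) // -normrX qX1 normr1.
have [q_ge0|q_lt0] := lerP 0 q; last by rewrite ltr0_norm // => q1; move: qN1; rewrite -q1 opprK eqxx.
rewrite ger0_norm // => q1; move: qint0k; rewrite /qint q1.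
under eq_bigr do rewrite expr1n.
by rewrite sumr_const card_ord => /eqP; rewrite pnatr_eq0.
Qed.

Lemma qfact0 : qfact q 0 = 1. Proof. by rewrite /qfact big_ord0. Qed.

Lemma qfactS k : qfact q k.+1 = qfact q k * qint q k.+1.
Proof. by rewrite /qfact big_ord_recr. Qed.

Lemma qfact_neq0 k : qfact q k != 0.
Proof. by rewrite /qfact prodf_seq_neq0; apply/allP => i _; exact: qint_neq0. Qed.

End QIntegers.

Section GaussCoefficients.
Variables (R : realFieldType) (q : R).
Hypothesis qN1 : q != -1.

(* The coefficient of t^i in prod_{k < M} (1 + q^k t) (Gauss' q-binomial theorem). *)
Definition gauss_coef (M i : nat) : R :=
  if (i <= M)%N then qbinom q M i * q ^+ 'C(i, 2) else 0.

Lemma gauss_coef0 M : gauss_coef M 0 = 1.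
Proof. by rewrite /gauss_coef /qbinom subn0 qfact0 mul1r divff ?qfact_neq0 ?mulr1. Qed.

Lemma gauss_coef_gt M i : (M < i)%N -> gauss_coef M i = 0.
Proof. by rewrite /gauss_coef ltnNge => /negbTE ->. Qed.

(* After factoring out c = [M]! q^C(i,2) / ([i+1]! [M-i]!), both q-Pascal rules
   become instances of qintD. *)
Lemma gauss_coef_pascal M i :
  gauss_coef M.+1 i.+1 = q ^+ i * gauss_coef M i + q ^+ i.+1 * gauss_coef M i.+1
  /\ gauss_coef M.+1 i.+1 = q ^+ M * gauss_coef M i + gauss_coef M i.+1.
Proof.
have [ltMi|leiM] := ltnP M i.
  by rewrite !gauss_coef_gt ?mulr0 ?addr0 //; lia.
pose c := qfact q M * q ^+ 'C(i, 2) / (qfact q i.+1 * qfact q (M - i)).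
have nzf := qfact_neq0 qN1; have nzi := qint_neq0 qN1.
have Ei : gauss_coef M i = c * qint q i.+1.
  rewrite /gauss_coef leiM /c /qbinom qfactS.
  by field; rewrite !nzf !nzi.
have ESi : gauss_coef M i.+1 = c * q ^+ i * qint q (M - i).
  case: (ltnP i M) => [ltiM|leMi]; last first.
    by rewrite gauss_coef_gt // (_ : M - i = 0)%N ?qint0 ?mulr0 //; lia.
  rewrite /gauss_coef ltiM /c /qbinom binS bin1 exprD.
  rewrite (_ : (M - i = (M - i.+1).+1)%N) ?qfactS; last by lia.
  by field; rewrite !nzf !nzi.
have ESS : gauss_coef M.+1 i.+1 = c * q ^+ i * qint q M.+1.
  rewrite /gauss_coef ltnS leiM /c /qbinom subSS binS bin1 exprD qfactS.
  by field; rewrite !nzf.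
have qM : q ^+ M = q ^+ i * q ^+ (M - i) by rewrite -exprD subnKC.
rewrite ESS Ei ESi; split.
  by rewrite (_ : M.+1 = i.+1 + (M - i))%N ?qintD; [ring | lia].
by rewrite qM (_ : M.+1 = (M - i) + i.+1)%N ?qintD; [ring | lia].
Qed.

Lemma gauss_coefSl M i :
  gauss_coef M.+1 i.+1 = q ^+ i * gauss_coef M i + q ^+ i.+1 * gauss_coef M i.+1.
Proof. exact: (gauss_coef_pascal M i).1. Qed.

Lemma gauss_coefSr M i :
  gauss_coef M.+1 i.+1 = q ^+ M * gauss_coef M i + gauss_coef M i.+1.
Proof. exact: (gauss_coef_pascal M i).2. Qed.

Lemma gauss_coef_rec M i :
  gauss_coef M.+2 i.+2 = (1 + q ^+ M.+1) * gauss_coef M.+1 i.+1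
                         + q ^+ i.+2 * gauss_coef M i.+2 - q ^+ i * gauss_coef M i.
Proof.
by rewrite [LHS]gauss_coefSr (gauss_coefSl M i.+1) (gauss_coefSl M i) !exprS; ring.
Qed.

(* Telescoping: by the first Pascal rule the (i+1)-th term is u (i+1) - u i
   with u i = (-q)^i gauss_coef N i. *)
Lemma gauss_coef_alternating_sum N :
  \sum_(i < N.+1) (-1) ^+ i * gauss_coef N i = (N == 0)%:R.
Proof.
case: N => [|N]; first by rewrite big_ord1 gauss_coef0 mulr1.
pose u k := (-1) ^+ k * q ^+ k * gauss_coef N k.
rewrite big_ord_recl gauss_coef0 mulr1.
rewrite (eq_bigr (fun i : 'I_N.+1 => u i.+1 - u i)) => [|i _]; last first.
  by rewrite lift0 gauss_coefSl /u !exprS; ring.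
rewrite -(big_mkord xpredT (fun i => u i.+1 - u i)) telescope_sumr //.
by rewrite /u gauss_coef_gt // gauss_coef0 !expr0 !mulr0 !mul1r sub0r subrr.
Qed.

End GaussCoefficients.

Section QExponentials.
Variables (R : realFieldType) (q : R).
Hypothesis qN1 : q != -1.

Definition qExp : nat -> R := fun i => q ^+ 'C(i, 2) / qfact q i.

Lemma qexpN_mul_qExp N : fps_mul (qexpN q) qExp N = fps_one N.
Proof.
have -> : fps_mul (qexpN q) qExp N
    = (-1) ^+ N / qfact q N * \sum_(i < N.+1) (-1) ^+ i * gauss_coef q N i.
  rewrite fps_mulC /fps_mul mulr_sumr; apply: eq_bigr => i _.
  have leiN : (i <= N)%N by rewrite -ltnS.
  have sgn : (-1) ^+ (N - i) = (-1) ^+ N * (-1) ^+ i :> R.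
    by rewrite -signr_odd oddB // signr_addb !signr_odd.
  rewrite /qExp /qexpN /gauss_coef leiN /qbinom sgn.
  by field; rewrite !qfact_neq0.
rewrite gauss_coef_alternating_sum // /fps_one.
by case: N => [|N]; rewrite ?qfact0 ?expr0 ?divr1 ?mulr1 ?mulr0.
Qed.

End QExponentials.

Section ExplicitFormula.
Variables (R : realFieldType) (q x s : R).
Hypothesis qN1 : q != -1.

Fixpoint rho (j : nat) : R :=
  match j with
  | 0 => 0
  | 1 => 1
  | j'.+2 => (x ^+ 2 + q ^+ j' * s) * rho j'
  end.

Lemma rho_even j : ~~ odd j -> rho j = 0.
Proof.
move=> /negbTE evj; rewrite -[j]odd_double_half evj add0n.
by elim: j./2 => [|k IH] //; rewrite doubleS /= IH mulr0.
Qed.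

Definition U_explicit M := \sum_(i < M.+1) gauss_coef q M i * x ^+ i * rho (M - i).

Lemma U_explicit0 : U_explicit 0 = 0.
Proof. by rewrite /U_explicit big_ord1 mulr0. Qed.

Lemma U_explicit1 : U_explicit 1 = 1.
Proof.
by rewrite /U_explicit big_ord_recr big_ord1 /= gauss_coef0 // mulr0 addr0 !mulr1.
Qed.

Lemma U_explicitS M :
  U_explicit M.+1 = rho M.+1 + \sum_(i < M.+1) gauss_coef q M.+1 i.+1 * x ^+ i.+1 * rho (M - i).
Proof.
rewrite /U_explicit big_ord_recl gauss_coef0 // expr0 !mul1r subn0.
by under eq_bigr do rewrite lift0 subSS.
Qed.

Lemma U_explicit_rec M :
  U_explicit M.+2 = (1 + q ^+ M.+1) * x * U_explicit M.+1 + q ^+ M * s * U_explicit M.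
Proof.
pose t i := q ^+ i * gauss_coef q M i * x ^+ i.
have tM i : (M < i)%N -> t i = 0 by move=> ltMi; rewrite /t gauss_coef_gt ?mulr0 ?mul0r.
have rho_step : q ^+ M * s * U_explicit M
    = \sum_(i < M.+1) t i * rho (M.+2 - i) - \sum_(i < M.+1) t i * x ^+ 2 * rho (M - i).
  rewrite -sumrB /U_explicit mulr_sumr; apply: eq_bigr => i _.
  have leiM : (i <= M)%N by rewrite -ltnS.
  have qM : q ^+ M = q ^+ i * q ^+ (M - i) by rewrite -exprD subnKC.
  by rewrite /t qM !subSn ?leqW //=; ring.
have peel_two : \sum_(i < M.+1) t i * rho (M.+2 - i)
    = t 0%N * rho M.+2 + t 1%N * rho M.+1 + \sum_(i < M.+1) t i.+2 * rho (M - i).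
  transitivity (\sum_(i < M.+3) t i * rho (M.+2 - i)).
    by rewrite (big_ord_recr M.+2) (big_ord_recr M.+1) /= !tM // !mul0r !addr0.
  by rewrite 2!big_ord_recl /= addrA.
have tail_rec : \sum_(i < M.+1) gauss_coef q M.+2 i.+2 * x ^+ i.+2 * rho (M - i)
    = (1 + q ^+ M.+1) * x * \sum_(i < M.+1) gauss_coef q M.+1 i.+1 * x ^+ i.+1 * rho (M - i)
      + \sum_(i < M.+1) t i.+2 * rho (M - i) - \sum_(i < M.+1) t i * x ^+ 2 * rho (M - i).
  rewrite mulr_sumr -big_split -sumrB; apply: eq_bigr => i _.
  by rewrite /= gauss_coef_rec // /t !exprS; ring.
have coef1 : gauss_coef q M.+2 1 = 1 + q ^+ M.+1 + q * gauss_coef q M 1.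
  by rewrite gauss_coefSr // gauss_coefSl // !gauss_coef0 //; ring.
rewrite rho_step peel_two !U_explicitS big_ord_recl coef1 tail_rec /t !gauss_coef0 // subn0.
by rewrite !expr1 !expr0; ring.
Qed.

Lemma U_explicit_eq m : U x s q m = U_explicit m.+1.
Proof.
rewrite /U; suff -> : Upair x s q m = (U_explicit m, U_explicit m.+1) by [].
elim: m => [|m IH] /=; first by rewrite U_explicit0 U_explicit1.
by rewrite IH U_explicit_rec; congr (_, _); ring.
Qed.

Definition rho_series j := rho j / qfact q j.
Definition U_series j := if j is m.+1 then U x s q m / qfact q m.+1 else 0.

Lemma U_series_factor j : U_series j = fps_mul (fps_scale x (qExp q)) rho_series j.
Proof.
have -> : U_series j = U_explicit j / qfact q j.
  case: j => [|j]; rewrite /U_series ?U_explicit_eq ?U_explicit0 ?mul0r //.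
rewrite /U_explicit mulr_suml; apply: eq_bigr => i _.
rewrite /gauss_coef -ltnS ltn_ord /fps_scale /qExp /rho_series /qbinom.
by field; rewrite !qfact_neq0.
Qed.

Lemma qexpN_mul_U_series N : fps_mul (fps_scale x (qexpN q)) U_series N = rho_series N.
Proof.
rewrite (eq_fps_mul (frefl _) U_series_factor) -fps_mulA.
rewrite (@eq_fps_mul _ _ fps_one _ rho_series) ?fps_mul1l // => i.
by rewrite fps_mul_scale qexpN_mul_qExp //; exact: fps_scale_one.
Qed.

End ExplicitFormula.

Lemma sum_odd_terms (V : zmodType) m (F : nat -> V) :
  (forall k, F (2 * k)%N = 0) -> \sum_(i < 2 * m) F i = \sum_(k < m) F (2 * k).+1.
Proof.
move=> Feven; elim: m => [|m IH]; first by rewrite muln0 !big_ord0.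
by rewrite mulnS add2n !big_ord_recr /= IH Feven addr0.
Qed.

Section GenocchiExpansion.
Variables (R : realFieldType) (q : R) (G : nat -> R) (x s : R).
Hypotheses (qN1 : q != -1) (hG : is_qGenocchi q G).

Let ex := fps_scale x (qexp q).
Let cosh_x := fps_add ex (fps_reflect ex).
Let sinh_x := fps_sub ex (fps_reflect ex).
Let genocchi_x := fps_scale x (fun n => genocchi_series q G n.+1).

Lemma genocchi_series_odd N : odd N -> genocchi_series q G N = 0.
Proof. by rewrite /genocchi_series => ->. Qed.

Lemma cosh_mul_genocchi N : fps_mul cosh_x genocchi_x N = sinh_x N.
Proof.
have := hG N.+1; rewrite fps_mul_divz // => genN.
have Ecosh : cosh_x =1 fps_scale x (fps_add (qexp q) (qexpN q)).
  by move=> n; rewrite /cosh_x /ex /fps_add /fps_reflect /fps_scale /qexpN /qexp; ring.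
rewrite (eq_fps_mul Ecosh (frefl _)) fps_mul_scale genN.
by rewrite /sinh_x /ex /fps_sub /fps_reflect /fps_scale /fps_mulz /qexpN /qexp; ring.
Qed.

Lemma cosh_even_sinh_odd N :
  fps_mul cosh_x (fps_even (U_series q x s)) N = fps_mul sinh_x (fps_odd (U_series q x s)) N.
Proof.
apply/eqP; rewrite -subr_eq0 fps_mul_even_odd.
have Erefl : fps_reflect ex =1 fps_scale x (qexpN q).
  by move=> n; rewrite /ex /fps_reflect /fps_scale /qexpN /qexp; ring.
rewrite (eq_fps_mul Erefl (frefl _)) qexpN_mul_U_series // /rho_series.
have [oddN|evN] := boolP (odd N); first by rewrite -signr_odd oddN expr1 subrr mul0r.
by rewrite rho_even // mul0r mulr0.
Qed.

Lemma genocchi_mul_odd N :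
  fps_mul genocchi_x (fps_odd (U_series q x s)) N = fps_even (U_series q x s) N.
Proof.
apply: (@fps_mulIl _ cosh_x) => [|M].
  rewrite /cosh_x /ex /fps_add /fps_reflect /fps_scale /qexp qfact0.
  by rewrite !expr0 invr1 !mul1r (_ : 1 + 1 = 2%:R) // pnatr_eq0.
by rewrite -fps_mulA (eq_fps_mul cosh_mul_genocchi (frefl _)) cosh_even_sinh_odd.
Qed.

Lemma U_odd_genocchi n :
  U x s q (2 * n).+1 / qfact q (2 * n).+2
  = \sum_(k < n.+1) x ^+ (2 * k).+1 * genocchi_series q G (2 * k).+2
                    * (U x s q (2 * (n - k)) / qfact q (2 * (n - k)).+1).
Proof.
have := genocchi_mul_odd (2 * n).+2.
rewrite /fps_even /= oddM andFb /= => <-.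
rewrite /fps_mul big_ord_recr /= subnn {2}/fps_odd mulr0 addr0.
pose F i := genocchi_x i * fps_odd (U_series q x s) ((2 * n).+2 - i).
transitivity (\sum_(i < 2 * n.+1) F i); first by rewrite mulnS add2n.
rewrite sum_odd_terms => [|k]; last first.
  by rewrite /F /genocchi_x /fps_scale genocchi_series_odd ?mulr0 ?mul0r //= oddM.
apply: eq_bigr => k _; have lekn : (k <= n)%N by rewrite -ltnS.
rewrite /F /genocchi_x /fps_scale /fps_odd /U_series.
by rewrite (_ : (2 * n).+2 - (2 * k).+1 = (2 * (n - k)).+1)%N /= ?oddM //; lia.
Qed.

End GenocchiExpansion.

Unset Implicit Arguments. Set Strict Implicit.

Theorem theorem3p3 (R : realFieldType) (q : R) (hq : q != -1)
  (G : nat -> R) (hG : is_qGenocchi q G) (n : nat) (x s : R) :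
  U x s q (2 * n).+1 =
  \sum_(k < n.+1)
     qbinom q (2 * n).+2 (2 * k) / qint q (2 * k).+1
     * qpoch (- q) q ((2 * n - 2 * k).+1)
     * (-1) ^+ (n - k) * G ((2 * n - 2 * k).+2)
     * x ^+ ((2 * n).+1 - 2 * k) * U x s q (2 * k).
Proof.
rewrite -[LHS](divfK (qfact_neq0 hq (2 * n).+2)) (U_odd_genocchi x s hq hG) mulr_suml.
rewrite (reindex_inj rev_ord_inj); apply: eq_bigr => k _ /=.
have lekn : (k <= n)%N by rewrite -ltnS.
rewrite subSS (_ : n - (n - k) = k)%N; last by lia.
rewrite (_ : (2 * n - 2 * k = 2 * (n - k))%N); last by lia.
rewrite (_ : ((2 * n).+1 - 2 * k = (2 * (n - k)).+1)%N); last by lia.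
rewrite /genocchi_series /= oddM /= (_ : (2 * (n - k))./2 = n - k)%N; last by lia.
rewrite /qbinom (_ : ((2 * n).+2 - 2 * k = (2 * (n - k)).+2)%N); last by lia.
rewrite !qfactS; field.
by rewrite !qfact_neq0 ?qint_neq0.
Qed.
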